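(* Let $\mathcal{M}=(\mathcal{S},\mathcal{A},p,r,\gamma)$ be a finite MDP with discount $\gamma\in[0,1)$ whose action space is factored as $\mathcal{A}=\mathcal{A}_1\times\cdots\times\mathcal{A}_D$, and let $\pi:\mathcal{S}\to\Delta(\mathcal{A})$ be a policy. Suppose there exist state abstractions $\phi_d:\mathcal{S}\to\mathcal{Z}_d$ ($d=1,\dots,D$), writing $\boldsymbol{\phi}=(\phi_1,\dots,\phi_D)$, $z_d=\phi_d(s)$, $z'_d=\phi_d(s')$, together with functions $p_d:\mathcal{Z}_d\times\mathcal{A}_d\to\Delta(\mathcal{Z}_d)$, $r_d:\mathcal{Z}_d\times\mathcal{A}_d\to\mathbb{R}$ and $\pi_d:\mathcal{Z}_d\to\Delta(\mathcal{A}_d)$, such that for all $s,s'\in\mathcal{S}$ and all $\boldsymbol{a}=(a_1,\dots,a_D)\in\mathcal{A}$: (i) $\sum_{\tilde{s}\in\boldsymbol{\phi}^{-1}(\boldsymbol{\phi}(s'))} p(\tilde{s}\mid s,\boldsymbol{a})=\prod_{d=1}^D p_d(z'_d\mid z_d,a_d)$; (ii) $r(s,\boldsymbol{a})=\sum_{d=1}^D r_d(z_d,a_d)$; (iii) $\pi(\boldsymbol{a}\mid s)=\prod_{d=1}^D\pi_d(a_d\mid z_d)$. Then there exist functions $q_d:\mathcal{S}\times\mathcal{A}_d\to\mathbb{R}$ ($d=1,\dots,D$) such that $Q^\pi(s,\boldsymbol{a})=\sum_{d=1}^D q_d(s,a_d)$ for all $s\in\mathcal{S}$, $\boldsymbo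l{a}\in\mathcal{A}$.
   Context: An MDP $(\mathcal{S},\mathcal{A},p,r,\gamma)$ has transition kernel $p(s'\mid s,a)$, deterministic reward $r(s,a)$ and discount $\gamma$. For a policy $\pi$ (a map from states to distributions over actions), $Q^\pi(s,a)=\mathbb{E}\big[\sum_{t\ge1}\gamma^{t-1}r(s_t,a_t)\mid s_1=s,a_1=a\big]$ where $s_{t+1}\sim p(\cdot\mid s_t,a_t)$ and $a_{t}\sim\pi(\cdot\mid s_t)$ for $t\ge2$. A state abstraction is a map $\phi:\mathcal{S}\to\mathcal{Z}$; for $\boldsymbol{\phi}=(\phi_1,\dots,\phi_D)$ and $\boldsymbol{z}=(z_1,\dots,z_D)$, $\boldsymbol{\phi}^{-1}(\boldsymbol{z})=\{\tilde s\in\mathcal{S}:\phi_d(\tilde s)=z_d\ \forall d\}$. An action $\boldsymbol{a}\in\mathcal{A}_1\times\cdots\times\mathcal{A}_D$ is written as its vector of sub-actions $(a_1,\dots,a_D)$. *)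

From HB Require Import structures.
From mathcomp Require Import all_boot all_order all_algebra.
From mathcomp Require Import all_classical all_reals all_analysis.
Set Implicit Arguments. Unset Strict Implicit. Unset Printing Implicit Defensive.
Import Order.TTheory GRing.Theory Num.Theory numFieldNormedType.Exports.
Local Open Scope ring_scope.

(* A finite MDP: states S : finType, actions Act : finType.
   p s a s' = p(s' | s, a), r s a = r(s,a), pi s a = pi(a | s). *)

Definition is_distr {R : realType} {T : finType} (f : T -> R) : Prop :=
  (forall x, 0 <= f x) /\ \sum_(x : T) f x = 1.

(* Joint law of (s_{t+1}, a_{t+1}) given s_1 = s, a_1 = a (index t from 0). *)
Fixpoint sa_law {R : realType} {S Act : finType}
  (p : S -> Act -> S -> R) (pi : S -> Act -> R) (s : S) (a : Act) (t : nat)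
  : S -> Act -> R :=
  match t with
  | 0 => fun s' a' => if (s' == s) && (a' == a) then 1 else 0
  | t'.+1 => fun s' a' =>
      \sum_(x : S) \sum_(y : Act) sa_law p pi s a t' x y * p x y s' * pi s' a'
  end.

Definition exp_reward {R : realType} {S Act : finType}
  (p : S -> Act -> S -> R) (r : S -> Act -> R) (pi : S -> Act -> R)
  (s : S) (a : Act) (t : nat) : R :=
  \sum_(x : S) \sum_(y : Act) sa_law p pi s a t x y * r x y.

(* Q^pi(s,a) = sum_{t>=1} gamma^{t-1} E[r(s_t,a_t)]  (limit of partial sums;
   by linearity of expectation this is the expectation of the discounted return) *)
Definition Qpi {R : realType} {S Act : finType}
  (p : S -> Act -> S -> R) (r : S -> Act -> R) (gamma : R)
  (pi : S -> Act -> R) (s : S) (a : Act) : R :=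
  limn (series (fun t => gamma ^+ t * exp_reward p r pi s a t)).

From HB Require Import structures.
From mathcomp Require Import all_boot all_order all_algebra.
From mathcomp Require Import all_classical all_reals all_analysis.
Import Order.TTheory GRing.Theory Num.Theory numFieldNormedType.Exports.
Local Open Scope ring_scope.

(* Fix a component d.  Conditions (i) and (iii) say that the
   transition kernel, pushed forward along the full abstraction
   s |-> (phi_1 s, ..., phi_D s), and the policy are product laws; hence their
   d-th marginals are the factor laws p_d and pi_d.  By induction on t, the
   d-th marginal of the joint law of (s_{t+1}, a_{t+1}) -- the law of
   (phi_d s_{t+1}, a_{t+1,d}) -- is the joint law of the small MDP
   (Z_d, A_d, p_d, pi_d) started at (phi_d s, a_d).  With (ii) the expected
   reward at time t splits into a sum over d of terms depending only on
   (s, a_d).  Each discounted series converges (bounded terms, gamma < 1), so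
   the limit of the sum of the series is the sum of the limits:
   q_d(s, a_d) is the Q-function of the component MDP (Z_d, A_d, p_d, r_d)
   under pi_d, evaluated at (phi_d s, a_d). *)

Section DependentProducts.
Context {R : comNzRingType} {I : finType} {T : I -> finType}.

Lemma sum_prod_dffun (F : forall i, T i -> R) :
  \sum_(f : {dffun forall i, T i}) \prod_i F i (f i) = \prod_i \sum_(x : T i) F i x.
Proof.
pose P_ := fun i => [ffun x : T i => F i x].
transitivity (\prod_i \sum_(x : T i) P_ i x); last first.
  by apply: eq_bigr => i _; apply: eq_bigr => x _; rewrite ffunE.
under eq_bigr do rewrite (big_tag (fun i (x : T i) => P_ i x)).
rewrite bigA_distr_big_dep -big_fprod.
rewrite (reindex (@fprod_of_dffun I T)); last exact/onW_bij/fprod_of_dffun_bij.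
apply: eq_bigr => f _; apply: eq_bigr => i _.
by rewrite /fprod_of_dffun fprodE ffunE.
Qed.

Lemma sum_prod_dffun_fixed (F : forall i, T i -> R) (d : I) (b : T d) :
  \sum_(f : {dffun forall i, T i} | f d == b) \prod_i F i (f i)
  = F d b * \prod_(i | i != d) \sum_(x : T i) F i x.
Proof.
(* [F'] kills every value other than [b] in the [d]-th factor. *)
pose F' := fun i (x : T i) => F i x * ((Tagged T x == Tagged T b) || (i != d))%:R.
have := sum_prod_dffun F'.
rewrite [X in _ = X -> _](bigD1 d) //= big_mkcond /=.
have -> : \sum_(x : T d) F' d x = F d b.
  rewrite (bigD1 b) //= big1 => [|x xb]; rewrite /F' eq_Tagged /=.
    by rewrite eqxx mulr1 addr0.
  by rewrite (negbTE xb) eqxx mulr0.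
have -> : \prod_(j | j != d) \sum_(x : T j) F' j x =
          \prod_(j | j != d) \sum_(x : T j) F j x.
  apply: eq_bigr => j jd; apply: eq_bigr => x _.
  by rewrite /F' jd orbT mulr1.
move=> <-; rewrite big_mkcond; apply: eq_bigr => f _.
rewrite big_split /=.
have -> : \prod_(j : I) ((Tagged T (f j) == Tagged T b) || (j != d))%:R = (f d == b)%:R :> R.
  rewrite (bigD1 d) //= big1 => [|j /= jd]; last by rewrite jd orbT.
  by rewrite eq_Tagged /= eqxx orbF mulr1.
by case: (f d == b); rewrite ?mulr1 ?mulr0.
Qed.

End DependentProducts.

Lemma marginal_prod_distr {R : realType} {I : finType} {T : I -> finType}
  (F : forall i, T i -> R) (hF : forall i, is_distr (F i)) (d : I) (b : T d) :
  \sum_(f : {dffun forall i, T i} | f d == b) \prod_i F i (f i) = F d b.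
Proof.
rewrite sum_prod_dffun_fixed big1 ?mulr1 // => i _.
by case: (hF i).
Qed.

Lemma le_sum_eq {R : realType} {T : finType} (u v : T -> R) :
  (forall x, u x <= v x) -> \sum_x u x = \sum_x v x -> u =1 v.
Proof.
move=> le_uv eq_sum x; apply/eqP; rewrite eq_sym -subr_eq0; apply/eqP.
have : \sum_y (v y - u y) = 0 by rewrite sumrB eq_sum subrr.
by move/psumr_eq0P; apply => // y _; rewrite subr_ge0.
Qed.

Section StateActionLaw.
Context {R : realType} {X Y : finType}.
Variables (P : X -> Y -> X -> R) (Pi : X -> Y -> R).

(* One step of the chain, regrouped so that the new state-action pair is
   integrated first: this is how an expectation at time t+1 reduces to one
   at time t. *)
Lemma sa_law_step_expect (law : X -> Y -> R) (g : X -> Y -> R) :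
  \sum_x \sum_y (\sum_x0 \sum_y0 law x0 y0 * P x0 y0 x * Pi x y) * g x y
  = \sum_x0 \sum_y0 law x0 y0 * \sum_x (P x0 y0 x * \sum_y (Pi x y * g x y)).
Proof.
transitivity (\sum_x \sum_y \sum_x0 \sum_y0 law x0 y0 * P x0 y0 x * Pi x y * g x y).
  apply: eq_bigr => x _; apply: eq_bigr => y _.
  by rewrite mulr_suml; apply: eq_bigr => x0 _; rewrite mulr_suml.
transitivity (\sum_x0 \sum_y0 \sum_x \sum_y law x0 y0 * P x0 y0 x * Pi x y * g x y).
  rewrite pair_bigA; under eq_bigr do rewrite pair_bigA.
  by rewrite exchange_big [RHS]pair_bigA; under [RHS]eq_bigr do rewrite pair_bigA.
apply: eq_bigr => x0 _; apply: eq_bigr => y0 _; rewrite mulr_sumr.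
apply: eq_bigr => x _; rewrite !mulr_sumr; apply: eq_bigr => y _.
by rewrite !mulrA.
Qed.

Lemma sa_law0_expect (x0 : X) (y0 : Y) (g : X -> Y -> R) :
  \sum_x \sum_y sa_law P Pi x0 y0 0 x y * g x y = g x0 y0.
Proof.
rewrite (bigD1 x0) //= [X in _ + X]big1 => [|x /= xx0]; last first.
  by apply: big1 => y _; rewrite (negbTE xx0) mul0r.
rewrite addr0 (bigD1 y0) //= [X in _ + X]big1 => [|y /= yy0]; last first.
  by rewrite eqxx (negbTE yy0) mul0r.
by rewrite !eqxx mul1r addr0.
Qed.

Hypotheses (hP : forall x y, is_distr (P x y)) (hPi : forall x, is_distr (Pi x)).

Lemma sa_law_ge0 x0 y0 t x y : 0 <= sa_law P Pi x0 y0 t x y.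
Proof.
elim: t x y => [|t IH] x y /=; first by case: ifP.
apply: sumr_ge0 => u _; apply: sumr_ge0 => v _.
by rewrite mulr_ge0 ?mulr_ge0 //; [case: (hP u v) | case: (hPi x)].
Qed.

Lemma sa_law_mass x0 y0 t : \sum_x \sum_y sa_law P Pi x0 y0 t x y = 1.
Proof.
elim: t => [|t IH].
  rewrite -[RHS](sa_law0_expect x0 y0 (fun _ _ => 1)).
  by apply: eq_bigr => x _; apply: eq_bigr => y _; rewrite mulr1.
transitivity (\sum_x \sum_y (\sum_u \sum_v sa_law P Pi x0 y0 t u v * P u v x * Pi x y) * 1).
  by apply: eq_bigr => x _; apply: eq_bigr => y _; rewrite mulr1.
rewrite sa_law_step_expect -[RHS]IH; apply: eq_bigr => u _; apply: eq_bigr => v _.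
have [_ hPu] := hP u v.
rewrite -[RHS]mulr1 -[in RHS]hPu; congr (_ * _); apply: eq_bigr => x _.
have [_ hx] := hPi x.
by under eq_bigr do rewrite mulr1; rewrite hx mulr1.
Qed.

Lemma sa_law_expect_bound x0 y0 t (g : X -> Y -> R) :
  `|\sum_x \sum_y sa_law P Pi x0 y0 t x y * g x y| <= \sum_x \sum_y `|g x y|.
Proof.
set M := \sum_x \sum_y `|g x y|.
have le_gM x y : `|g x y| <= M.
  rewrite /M (bigD1 x) //= (bigD1 y) //= -addrA lerDl.
  by rewrite addr_ge0 ?sumr_ge0 // => *; rewrite ?sumr_ge0.
apply: le_trans (ler_norm_sum _ _ _) _.
apply: (@le_trans _ _ (\sum_x \sum_y sa_law P Pi x0 y0 t x y * M)).
  apply: ler_sum => x _; apply: le_trans (ler_norm_sum _ _ _) _.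
  apply: ler_sum => y _; rewrite normrM ger0_norm ?sa_law_ge0 //.
  by rewrite ler_wpM2l ?sa_law_ge0.
rewrite -[X in _ <= X]mul1r -(sa_law_mass x0 y0 t) mulr_suml.
by apply: ler_sum => x _; rewrite mulr_suml.
Qed.

End StateActionLaw.

Section FactoredMDP.
Context {R : realType} {S : finType} {D : nat} {A Z : 'I_D -> finType}.
Local Notation Act := {dffun forall d : 'I_D, A d}.
Context {p : S -> Act -> S -> R} {policy : S -> Act -> R}.
Context {phi : forall d, S -> Z d}.
Context {pd : forall d, Z d -> A d -> Z d -> R} {pid : forall d, Z d -> A d -> R}.
Hypotheses (hp : forall s a, is_distr (p s a)) (hpd : forall d z a, is_distr (pd d z a))
  (hpid : forall d z, is_distr (pid d z)).
Hypothesis p_factor : forall s s' (a : Act),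
  \sum_(st : S | [forall d, phi d st == phi d s']) p s a st
  = \prod_(d < D) pd d (phi d s) (a d) (phi d s').
Hypothesis policy_factor :
  forall s (a : Act), policy s a = \prod_(d < D) pid d (phi d s) (a d).

Definition abstraction (s : S) : {dffun forall d, Z d} := [ffun d => phi d s].

Lemma policy_marginal s d (h : A d -> R) :
  \sum_(a : Act) policy s a * h (a d) = \sum_b pid d (phi d s) b * h b.
Proof.
rewrite (partition_big (fun a : Act => a d) predT) //; apply: eq_bigr => b _.
transitivity (\sum_(a : Act | a d == b) policy s a * h b).
  by apply: eq_bigr => a /= /eqP ->.
rewrite -mulr_suml; under eq_bigr do rewrite policy_factor.
by rewrite (marginal_prod_distr (fun i => pid i (phi i s))).
Qed.

(* Condition (i) says the pushforward of [p s a] along [abstraction] is the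
   product law; it is stated only on attained abstraction vectors, and the
   unattained ones carry no product mass since both laws have total mass 1. *)
Lemma abstraction_law s a zv :
  \sum_(x | abstraction x == zv) p s a x = \prod_e pd e (phi e s) (a e) (zv e).
Proof.
move: zv; apply: (le_sum_eq (fun zv => \sum_(x | abstraction x == zv) p s a x)
                           (fun zv => \prod_e pd e (phi e s) (a e) (zv e))).
- move=> zv /=; case: (pickP (fun x => abstraction x == zv)) => [s' /eqP <- | none].
    rewrite le_eqVlt; apply/orP; left; apply/eqP.
    transitivity (\sum_(st | [forall e, phi e st == phi e s']) p s a st).
      apply: eq_bigl => st; apply/idP/idP => [/eqP E|/forallP E].
        by apply/forallP => e; move/ffunP: E => /(_ e); rewrite !ffunE => ->.
      by apply/eqP/ffunP => e; rewrite !ffunE; apply/eqP/E.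
    by rewrite p_factor; apply: eq_bigr => e _; rewrite ffunE.
  rewrite big_pred0 //; apply: prodr_ge0 => e _.
  by case: (hpd e (phi e s) (a e)).
- transitivity (1 : R).
    by have [_ <-] := hp s a; rewrite (partition_big abstraction predT).
  rewrite (sum_prod_dffun (fun e => pd e (phi e s) (a e))) big1 // => e _.
  by case: (hpd e (phi e s) (a e)).
Qed.

Lemma transition_marginal s a d (G : Z d -> R) :
  \sum_x p s a x * G (phi d x) = \sum_z pd d (phi d s) (a d) z * G z.
Proof.
rewrite (partition_big abstraction predT) //=.
transitivity (\sum_(zv : {dffun forall e, Z e})
                (\prod_e pd e (phi e s) (a e) (zv e)) * G (zv d)).
  apply: eq_bigr => zv _; rewrite -abstraction_law mulr_suml.
  by apply: eq_bigr => x /eqP <-; rewrite ffunE.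
rewrite (partition_big (fun zv : {dffun forall e, Z e} => zv d) predT) //=.
apply: eq_bigr => z _.
transitivity (\sum_(zv : {dffun forall e, Z e} | zv d == z)
                (\prod_e pd e (phi e s) (a e) (zv e)) * G z).
  by apply: eq_bigr => zv /eqP ->.
by rewrite -mulr_suml (marginal_prod_distr (fun e => pd e (phi e s) (a e))).
Qed.

Lemma sa_law_marginal s a d t (g : Z d -> A d -> R) :
  \sum_x \sum_(y : Act) sa_law p policy s a t x y * g (phi d x) (y d)
  = \sum_z \sum_b sa_law (pd d) (pid d) (phi d s) (a d) t z b * g z b.
Proof.
elim: t g => [|t IH] g.
  rewrite sa_law0_expect.
  exact: (sa_law0_expect _ _ _ _ (fun x (y : Act) => g (phi d x) (y d))).
rewrite /= (sa_law_step_expect _ _ _ (fun x (y : Act) => g (phi d x) (y d))).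
pose K z0 b0 := \sum_z pd d z0 b0 z * \sum_b (pid d z b * g z b).
transitivity (\sum_x0 \sum_(y0 : Act) sa_law p policy s a t x0 y0 * K (phi d x0) (y0 d)).
  apply: eq_bigr => x0 _; apply: eq_bigr => y0 _; congr (_ * _).
  under eq_bigr do rewrite policy_marginal.
  exact: (transition_marginal x0 y0 d (fun z => \sum_b pid d z b * g z b)).
by rewrite IH sa_law_step_expect.
Qed.

Context {r : S -> Act -> R} {rd : forall d, Z d -> A d -> R}.
Hypothesis r_factor : forall s (a : Act), r s a = \sum_(d < D) rd d (phi d s) (a d).

Lemma exp_reward_split s a t :
  exp_reward p r policy s a t
  = \sum_(d < D) exp_reward (pd d) (rd d) (pid d) (phi d s) (a d) t.
Proof.
rewrite /exp_reward.
under eq_bigr do under eq_bigr do rewrite r_factor mulr_sumr.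
under eq_bigr do rewrite exchange_big.
rewrite exchange_big; apply: eq_bigr => d _.
exact: (sa_law_marginal s a d t (rd d)).
Qed.

End FactoredMDP.

Lemma discounted_series_cvg {R : realType} (gamma M : R) (u : nat -> R) :
  0 <= gamma -> gamma < 1 -> (forall t, `|u t| <= M) ->
  cvgn (series (fun t => gamma ^+ t * u t)).
Proof.
move=> g0 g1 hu.
have M0 : 0 <= M by apply: le_trans (hu 0%N).
apply: normed_cvg.
apply: (@series_le_cvg _ _ (geometric M gamma)).
- by move=> n /=.
- by move=> n; rewrite /geometric /= mulr_ge0 ?exprn_ge0.
- move=> n; rewrite /geometric /= normrM ger0_norm ?exprn_ge0 // mulrC.
  by rewrite ler_wpM2r ?exprn_ge0.
- by apply: is_cvg_geometric_series; rewrite ger0_norm.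
Qed.

Lemma lim_series_sum {R : realType} {I : finType} (w : I -> nat -> R) :
  (forall i, cvgn (series (w i))) ->
  limn (series (fun t => \sum_i w i t)) = \sum_i limn (series (w i)).
Proof.
move=> hc.
have -> : series (fun t => \sum_i w i t) = (fun n => \sum_i series (w i) n).
  by apply/funext => n; rewrite /series /=; exact: exchange_big.
apply: cvg_lim => //; apply: (cvg_big (op := +%R)) => //.
exact: add_continuous.
Qed.

(* For a finite MDP with discount in [0, 1), the series defining [Qpi]
   converges: expected rewards are bounded by the total size of [r]. *)
Lemma Qpi_series_cvg {R : realType} {X Y : finType} (P : X -> Y -> X -> R)
  (rew : X -> Y -> R) (gamma : R) (Pi : X -> Y -> R) x0 y0 :
  0 <= gamma -> gamma < 1 ->
  (forall x y, is_distr (P x y)) -> (forall x, is_distr (Pi x)) ->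
  cvgn (series (fun t => gamma ^+ t * exp_reward P rew Pi x0 y0 t)).
Proof.
move=> g0 g1 hP hPi.
apply: (discounted_series_cvg gamma (\sum_x \sum_y `|rew x y|)) => // t.
rewrite /exp_reward; exact: sa_law_expect_bound.
Qed.

Theorem theorem1 (R : realType) (S : finType) (D : nat)
  (A : 'I_D -> finType) (Z : 'I_D -> finType)
  (p : S -> {dffun forall d : 'I_D, A d} -> S -> R)
  (r : S -> {dffun forall d : 'I_D, A d} -> R)
  (gamma : R)
  (pi : S -> {dffun forall d : 'I_D, A d} -> R)
  (phi : forall d : 'I_D, S -> Z d)
  (pd : forall d : 'I_D, Z d -> A d -> Z d -> R)
  (rd : forall d : 'I_D, Z d -> A d -> R)
  (pid : forall d : 'I_D, Z d -> A d -> R) :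
  0 <= gamma -> gamma < 1 ->
  (forall s a, is_distr (p s a)) ->
  (forall s, is_distr (pi s)) ->
  (forall d z a, is_distr (pd d z a)) ->
  (forall d z, is_distr (pid d z)) ->
  (forall s s' (a : {dffun forall d : 'I_D, A d}),
      \sum_(st : S | [forall d, phi d st == phi d s']) p s a st
      = \prod_(d < D) pd d (phi d s) (a d) (phi d s')) ->
  (forall s (a : {dffun forall d : 'I_D, A d}),
      r s a = \sum_(d < D) rd d (phi d s) (a d)) ->
  (forall s (a : {dffun forall d : 'I_D, A d}),
      pi s a = \prod_(d < D) pid d (phi d s) (a d)) ->
  exists q : forall d : 'I_D, S -> A d -> R,
    forall s (a : {dffun forall d : 'I_D, A d}),
      Qpi p r gamma pi s a = \sum_(d < D) q d s (a d).
Proof.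
move=> g0 g1 hp _ hpd hpid p_factor r_factor pi_factor.
exists (fun d s b => Qpi (pd d) (rd d) gamma (pid d) (phi d s) b) => s a.
rewrite /Qpi; under eq_fun do
  rewrite (exp_reward_split hp hpd hpid p_factor pi_factor r_factor) mulr_sumr.
apply: lim_series_sum => d.
exact: Qpi_series_cvg.
Qed.
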